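(* Let $m\ge 3$ be an integer. Then $m=[z\,y_k\,x_k\,\dots\,y_2\,x_2\,y_1\,x_1]_{\boldsymbol b}$ for some integer $k\ge0$ and integers $x_i,y_i,z$ satisfying: $0\le x_i<q^{2i-1}-1$ for all $1\le i\le k$; $0\le y_i<2p$ for all $1\le i\le k$; $\{y_i-2,y_i-1,y_i\}\subset A+A+A$ for all $1\le i\le k$; and $3\le z\le 6pq^{2k+1}$.
   Context: Fix a prime $p$ and a set $A\subset\{1,\dots,\lfloor p/2\rfloor-1\}$ such that $A\cap(A+A+\{0,1\})=\emptyset$ and $A+A+A$ contains $p+2$ consecutive integers. Let $q>100p$ be a prime power. Let $\boldsymbol b=(b_1,b_2,\dots)$ with $b_i=q^i-1$ for $i$ odd and $b_i=p$ for $i$ even, and for arbitrary integers $x_1,\dots,x_n$ write $[x_n\,\dots\,x_1]_{\boldsymbol b}:=x_1+x_2b_1+x_3b_1b_2+\dots+x_nb_1\cdots b_{n-1}$ (so the $(2i-1)$-th digit has weight $b_1\cdots b_{2i-2}$ and the $2i$-th digit has weight $b_1\cdots b_{2i-1}$). *)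

From mathcomp Require Import all_boot all_order all_algebra.
Set Implicit Arguments. Unset Strict Implicit. Unset Printing Implicit Defensive.
Import Order.TTheory GRing.Theory Num.Theory.
Local Open Scope ring_scope.

Definition in_AAA (A : pred int) (n : int) : Prop :=
  exists a1 a2 a3, [/\ a1 \in A, a2 \in A, a3 \in A & n = a1 + a2 + a3].

Definition in_AA01 (A : pred int) (n : int) : Prop :=
  exists a1 a2 (e : bool), [/\ a1 \in A, a2 \in A & n = a1 + a2 + e%:R].

Definition prime_power (q : nat) : Prop :=
  exists r e : nat, [/\ prime r, (0 < e)%N & q = (r ^ e)%N].

Definition bseq (p q : nat) (i : nat) : int :=
  if odd i then (q ^ i)%:Z - 1 else p%:Z.

(* [s_n ... s_1]_b where s = [:: s_1; s_2; ...; s_n] (lowest digit first):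
   s_1 + s_2 b_1 + s_3 b_1 b_2 + ... *)
Definition bnum (p q : nat) (s : seq int) : int :=
  \sum_(j < size s) s`_j * \prod_(i < j) bseq p q i.+1.

Definition digits_xyz (k : nat) (x y : nat -> int) (z : int) : seq int :=
  flatten [seq [:: x i; y i] | i <- iota 1 k] ++ [:: z].

From Pilot Require Import Defs.
From mathcomp Require Import all_boot all_order all_algebra zify.
Set Implicit Arguments. Unset Strict Implicit. Unset Printing Implicit Defensive.
Import Order.TTheory GRing.Theory Num.Theory.
Local Open Scope ring_scope.

(* Greedy mixed-radix expansion.  Fix c with c + j in A+A+A for all j < p + 2;
   the bounds on A force 3 <= c and c + 2 <= p.  Given R >= 3 and a position t,
   either R is already small enough to be the top digit z, or we peel off two
   digits: x := R mod B with B = q^(2t+1) - 1, and, writing R div B - (c + 2)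
   = p * R' + r with 0 <= r < p, the digit y := c + 2 + r.  Then
   R = x + B * (y + p * R'), the window gives y - 2, y - 1, y in A+A+A,
   y < c + 2 + p <= 2p, and R' is again >= 3 but smaller than R. *)

Definition bnum_from (p q o : nat) (s : seq int) : int :=
  \sum_(j < size s) s`_j * \prod_(i < j) Defs.bseq p q (o + i).+1.

Lemma bnum_from_cons p q o a s :
  bnum_from p q o (a :: s) = a + Defs.bseq p q o.+1 * bnum_from p q o.+1 s.
Proof.
rewrite /bnum_from /= big_ord_recl /= big_ord0 mulr1 mulr_sumr; congr (_ + _).
apply: eq_bigr => j _; rewrite big_ord_recl /= addn0 mulrCA; congr (_ * (_ * _)).
by apply: eq_bigr => i _; rewrite /bump /= add1n addnS addSn.
Qed.

Lemma bnum_from_single p q o a : bnum_from p q o [:: a] = a.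
Proof. by rewrite /bnum_from big_ord1 big_ord0 mulr1. Qed.

Lemma bnum_from_pair p q t a b s :
  bnum_from p q (2 * t) (a :: b :: s)
  = a + ((q ^ (2 * t).+1)%N%:Z - 1) * (b + p%:Z * bnum_from p q (2 * t.+1) s).
Proof.
rewrite !bnum_from_cons /Defs.bseq /= oddM andFb /=.
by rewrite mulnS addSn add1n.
Qed.

Definition tail_digits (t k : nat) (x y : nat -> int) (z : int) : seq int :=
  flatten [seq [:: x i; y i] | i <- iota t.+1 k] ++ [:: z].

Lemma tail_digits_cons t k x y z :
  tail_digits t k.+1 x y z = [:: x t.+1, y t.+1 & tail_digits t.+1 k x y z].
Proof. by []. Qed.

Lemma tail_digits_ext t k x x' y y' z :
  (forall i, (t < i)%N -> x' i = x i /\ y' i = y i) ->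
  tail_digits t k x' y' z = tail_digits t k x y z.
Proof.
move=> agree; congr (flatten _ ++ _); apply/eq_in_map => i; rewrite mem_iota => hi.
by have [-> ->] := agree i ltac:(lia).
Qed.

Lemma in_AAA_bounds (A : pred int) (lo hi n : int) :
  (forall a, a \in A -> lo <= a <= hi) -> in_AAA A n -> 3 * lo <= n <= 3 * hi.
Proof.
move=> hA [a1 [a2 [a3 [h1 h2 h3 ->]]]].
move: (hA _ h1) (hA _ h2) (hA _ h3) => /andP[? ?] /andP[? ?] /andP[? ?]; lia.
Qed.

Lemma window_triple (A : pred int) (c r : int) (n : nat) :
  (forall j : nat, (j < n + 2)%N -> in_AAA A (c + j%:Z)) -> 0 <= r < n%:Z ->
  [/\ in_AAA A (c + 2 + r - 2), in_AAA A (c + 2 + r - 1) & in_AAA A (c + 2 + r)].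
Proof.
move=> window hr; have er : r = `|r|%N%:Z by lia.
split; [have := window `|r|%N | have := window `|r|.+1%N | have := window `|r|.+2%N];
  by move/(_ ltac:(lia)); congr in_AAA; lia.
Qed.

Lemma digit_step (B P d R : int) :
  2 <= B -> 1 <= P -> 0 <= d <= 3 * P -> 6 * P * (B + 1) < R ->
  exists x0 r R', [/\ 0 <= x0 < B, 0 <= r < P, 3 <= R' < R
                    & R = x0 + B * (d + r + P * R')].
Proof.
move=> hB hP /andP[hd0 hd] hR.
pose S := (R %/ B)%Z; pose x0 := (R %% B)%Z.
pose R' := ((S - d) %/ P)%Z; pose r := ((S - d) %% P)%Z.
have eR : R = S * B + x0 := divz_eq R B.
have eS : S - d = R' * P + r := divz_eq (S - d) P.
have hx0 : 0 <= x0 < B by rewrite modz_ge0 ?ltz_pmod //; lia.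
have hr : 0 <= r < P by rewrite modz_ge0 ?ltz_pmod //; lia.
have hS : 6 * P <= S by nia.
exists x0, r, R'; split => //; nia.
Qed.

Definition admissible_block (p q : nat) (A : pred int) (i : nat) (xi yi : int) : Prop :=
  [/\ 0 <= xi, xi < (q ^ (2 * i - 1))%N%:Z - 1, 0 <= yi, yi < 2 * p%:Z
    & [/\ in_AAA A (yi - 2), in_AAA A (yi - 1) & in_AAA A yi]].

Section Representation.
Variables (p q : nat) (A : pred int) (c : int).
Hypotheses (hq : (3 <= q)%N) (hc0 : 0 <= c) (hcp : c + 2 <= p%:Z).
Hypothesis window : forall j : nat, (j < p + 2)%N -> in_AAA A (c + j%:Z).

Lemma represent_from (t : nat) (R : int) : 3 <= R ->
  exists (k : nat) (x y : nat -> int) (z : int),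
    [/\ forall i, (t < i <= t + k)%N -> admissible_block p q A i (x i) (y i),
        3 <= z, z <= 6 * p%:Z * (q ^ (2 * (t + k) + 1))%N%:Z
      & R = bnum_from p q (2 * t) (tail_digits t k x y z)].
Proof.
move=> hR; have [N hRN] : exists N : nat, R <= N%:Z by exists `|R|%N; lia.
elim: N t R hR hRN => [|N IH] t R hR hRN; first by lia.
have [small|large] := lerP R (6 * p%:Z * (q ^ (2 * (t + 0) + 1))%N%:Z).
  exists 0%N, (fun=> 0), (fun=> 0), R; split => //; first by move=> i; lia.
  by rewrite bnum_from_single.
have hQ : (q <= q ^ (2 * t).+1)%N by rewrite expnS leq_pmulr // expn_gt0; lia.
have [x0 [r [R' [hx0 hr hR' eR]]]] :=
  @digit_step ((q ^ (2 * t).+1)%N%:Z - 1) p%:Z (c + 2) R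
    ltac:(lia) ltac:(lia) ltac:(lia) ltac:(rewrite addn0 addn1 in large; lia).
have [k [x [y [z [blocks hz3 hzB eR']]]]] := IH t.+1 R' ltac:(lia) ltac:(lia).
exists k.+1, (fun i => if i == t.+1 then x0 else x i),
  (fun i => if i == t.+1 then c + 2 + r else y i), z; split => //.
- move=> i hi; case: eqP => [->|i_ne]; last by apply: blocks; lia.
  have [h2 h1 h0] := window_triple window hr.
  rewrite /admissible_block; have -> : (2 * t.+1 - 1 = (2 * t).+1)%N by lia.
  by split => //; lia.
- by rewrite -[(t + k.+1)%N]addSnnS.
- rewrite tail_digits_cons eqxx (@tail_digits_ext _ _ x _ y) => [|i hi]; last first.
    by have /negbTE -> : i != t.+1 by lia.
  by rewrite bnum_from_pair -eR'.
Qed.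

End Representation.

Theorem lemma5p1 (p q : nat) (A : pred int)
  (hp : prime p)
  (hA : forall a, a \in A -> 1 <= a <= (p %/ 2)%N%:Z - 1)
  (hAdisj : forall a, a \in A -> ~ in_AA01 A a)
  (hAAA : exists c : int, forall j : nat, (j < p + 2)%N -> in_AAA A (c + j%:Z))
  (hq : prime_power q) (hqp : (100 * p < q)%N)
  (m : int) (hm : 3 <= m) :
  exists (k : nat) (x y : nat -> int) (z : int),
    [/\ forall i : nat, (1 <= i <= k)%N ->
          [/\ 0 <= x i, x i < (q ^ (2 * i - 1))%N%:Z - 1,
              0 <= y i, y i < 2 * p%:Z
            & [/\ in_AAA A (y i - 2), in_AAA A (y i - 1) & in_AAA A (y i)]],
        3 <= z, z <= 6 * p%:Z * (q ^ (2 * k + 1))%N%:Z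
      & m = bnum p q (digits_xyz k x y z)].
Proof.
have hp2 := prime_gt1 hp.
have [c window] := hAAA.
(* The first and last elements of the window bound c from both sides. *)
have window_bottom := in_AAA_bounds hA (window 0%N ltac:(lia)).
have window_top := in_AAA_bounds hA (window p.+1 ltac:(lia)).
have hc0 : 0 <= c by lia.
have hcp : c + 2 <= p%:Z by lia.
have hq3 : (3 <= q)%N by lia.
have [k [x [y [z [blocks hz3 hzB hm']]]]] := represent_from hq3 hc0 hcp window 0 hm.
by exists k, x, y, z; split => // i hi; apply: blocks.
Qed.
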